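(* Let $n\ge 2$ and $u,v>0$. There exists an $n$-simplex having one edge of length $v$ and all its remaining edges of length $u$ if and only if $$0<\frac{v}{u}<\sqrt{\frac{2n}{n-1}}.$$
   Context: An $n$-simplex is the convex hull of $n+1$ affinely independent points in a Euclidean space (so it is non-degenerate). *)

From HB Require Import structures.
From mathcomp Require Import all_boot all_order all_algebra.
Set Implicit Arguments. Unset Strict Implicit. Unset Printing Implicit Defensive.
Import Order.TTheory GRing.Theory Num.Theory.
Local Open Scope ring_scope.

Definition edist (R : rcfType) (d : nat) (x y : 'rV[R]_d) : R :=
  Num.sqrt (\sum_(k < d) (x ord0 k - y ord0 k) ^+ 2).

Definition aff_indep (R : rcfType) (d m : nat) (p : 'I_m -> 'rV[R]_d) : Prop :=
  forall c : 'I_m -> R,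
    \sum_(i < m) c i = 0 -> \sum_(i < m) c i *: p i = 0 -> forall i, c i = 0.

Definition one_edge_simplex (R : rcfType) (n d : nat) (p : 'I_n.+1 -> 'rV[R]_d)
    (u v : R) : Prop :=
  aff_indep p /\
  exists i j : 'I_n.+1, i != j /\
    forall k l : 'I_n.+1, k != l ->
      edist (p k) (p l) =
        (if ((k == i) && (l == j)) || ((k == j) && (l == i)) then v else u).

(* If the weights a_k sum to 0, then 2 |sum_k a_k p_k|^2 = - sum_(k,l) a_k a_l |p_k - p_l|^2.
   Taking weights n - 1 at both ends of the long edge and -2 at the other vertices, the
   right-hand side is 2 (n - 1) (2 n u^2 - (n - 1) v^2), and affine independence makes it
   positive.  Conversely, over the regular simplex s e_1, ..., s e_n with s = u / sqrt 2, an
   apex z e_0 + y (e_1 + ... + e_n) + t e_j can be put at distance v from s e_j and u from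
   the other vertices, and the best choice of y leaves z^2 > 0 exactly when
   (n - 1) v^2 < 2 n u^2. *)

From HB Require Import structures.
From mathcomp Require Import all_boot all_order all_algebra.
From mathcomp Require Import ring.
Set Implicit Arguments. Unset Strict Implicit. Unset Printing Implicit Defensive.
Import Order.TTheory GRing.Theory Num.Theory.
Local Open Scope ring_scope.

Lemma sumr_delta (R : nzSemiRingType) (I : finType) (F : I -> R) (j : I) :
  \sum_(l : I) F l * (l == j)%:R = F j.
Proof.
by rewrite (bigD1 j) //= eqxx mulr1 big1 ?addr0 // => l /negbTE ->; rewrite mulr0.
Qed.

Definition sqnorm (R : nzSemiRingType) (d : nat) (x : 'rV[R]_d) : R :=
  \sum_(k < d) x 0 k ^+ 2.

Lemma sqnorm_eq0 (R : realDomainType) d (x : 'rV[R]_d) : (sqnorm x == 0) = (x == 0).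
Proof.
rewrite psumr_eq0 => [|k _]; last exact: sqr_ge0.
apply/allP/eqP => [x0|-> k _]; last by rewrite mxE expr0n eqxx.
by apply/rowP => k; apply/eqP; rewrite mxE -sqrf_eq0 (implyP (x0 k _)) ?mem_index_enum.
Qed.

Lemma sqnorm_gt0 (R : realDomainType) d (x : 'rV[R]_d) : (0 < sqnorm x) = (x != 0).
Proof. by rewrite lt0r sqnorm_eq0 sumr_ge0 ?andbT // => k _; exact: sqr_ge0. Qed.

Lemma edistE (R : rcfType) d (x y : 'rV[R]_d) : edist x y = Num.sqrt (sqnorm (x - y)).
Proof. by congr Num.sqrt; apply: eq_bigr => k _; rewrite !mxE. Qed.

Lemma edistC (R : rcfType) d (x y : 'rV[R]_d) : edist x y = edist y x.
Proof. by congr Num.sqrt; apply: eq_bigr => k _; rewrite -sqrrN opprB. Qed.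

Lemma sqr_edist (R : rcfType) d (x y : 'rV[R]_d) : edist x y ^+ 2 = sqnorm (x - y).
Proof. by rewrite edistE sqr_sqrtr // sumr_ge0 // => k _; exact: sqr_ge0. Qed.

Lemma sqnorm_subZdelta (R : comNzRingType) d (x : 'rV[R]_d) (s : R) k :
  sqnorm (x - s *: delta_mx 0 k) = sqnorm x - 2 * s * x 0 k + s ^+ 2.
Proof.
rewrite -addrA addrC -(sumr_delta (fun l => - (2 * s * x 0 l) + s ^+ 2) k) addrC -big_split /=.
by apply: eq_bigr => l _; rewrite !mxE eqxx /=; case: (l == k) => /=; ring.
Qed.

Lemma sqnorm_Zdelta (R : comNzRingType) d (s : R) (k : 'I_d) :
  sqnorm (s *: delta_mx 0 k) = s ^+ 2.
Proof.
rewrite /sqnorm -(sumr_delta (fun=> s ^+ 2) k); apply: eq_bigr => l _.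
by rewrite !mxE eqxx /=; case: (l == k) => /=; ring.
Qed.

Lemma sqnorm_Zdelta_sub (R : comNzRingType) d (s : R) (k l : 'I_d) : k != l ->
  sqnorm (s *: delta_mx 0 k - s *: delta_mx 0 l) = 2 * s ^+ 2.
Proof.
by move=> /negbTE kl; rewrite sqnorm_subZdelta sqnorm_Zdelta !mxE eq_sym kl /=; ring.
Qed.

Lemma sqr_comb_sum0 (R : comNzRingType) m (a y : 'I_m -> R) : \sum_k a k = 0 ->
  2 * (\sum_k a k * y k) ^+ 2 = - \sum_k \sum_l a k * a l * (y k - y l) ^+ 2.
Proof.
move=> a0; have expand k : \sum_l a k * a l * (y k - y l) ^+ 2 =
    a k * y k ^+ 2 * \sum_l a l + a k * \sum_l a l * y l ^+ 2
    - 2 * (a k * y k) * \sum_l a l * y l.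
  by rewrite !mulr_sumr -big_split -sumrB; apply: eq_bigr => l _ /=; ring.
rewrite (eq_bigr _ (fun k _ => expand k)) sumrB big_split /= -!mulr_suml -mulr_sumr.
by rewrite a0 mulr0 mul0r add0r; ring.
Qed.

Lemma sqnorm_comb_sum0 (R : comNzRingType) d m (x : 'I_m -> 'rV[R]_d) (a : 'I_m -> R) :
  \sum_k a k = 0 ->
  2 * sqnorm (\sum_k a k *: x k) = - \sum_k \sum_l a k * a l * sqnorm (x k - x l).
Proof.
move=> a0; rewrite /sqnorm mulr_sumr.
rewrite (eq_bigr (fun c => - \sum_k \sum_l a k * a l * (x k 0 c - x l 0 c) ^+ 2)); last first.
  move=> c _; rewrite -sqr_comb_sum0 // summxE.
  by congr (_ * _ ^+ 2); apply: eq_bigr => k _; rewrite mxE.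
rewrite sumrN exchange_big; congr (- _); apply: eq_bigr => k _.
rewrite exchange_big; apply: eq_bigr => l _; rewrite mulr_sumr.
by apply: eq_bigr => c _; rewrite !mxE.
Qed.

Section OneEdgeDistances.

Variables (R : rcfType) (m d : nat) (p : 'I_m -> 'rV[R]_d) (u v : R) (i j : 'I_m).
Hypothesis neq_ij : i != j.
Hypothesis edist_p : forall k l, k != l ->
  edist (p k) (p l) = if ((k == i) && (l == j)) || ((k == j) && (l == i)) then v else u.

Lemma sqnorm_one_edge k l : sqnorm (p k - p l) =
  u ^+ 2 * (1 - (k == l)%:R)
  + (v ^+ 2 - u ^+ 2) * ((k == i)%:R * (l == j)%:R + (k == j)%:R * (l == i)%:R).
Proof.
have not_ij x : (x == i) && (x == j) = false by case: eqP => // ->; exact: negbTE.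
have [-> | neq_kl] := eqVneq k l.
  rewrite subrr /sqnorm big1 => [|c _]; last by rewrite mxE expr0n.
  by move: (not_ij l); case: (l == i); case: (l == j) => //= _; ring.
rewrite -sqr_edist edist_p //= subr0 mulr1.
move: (not_ij k) (not_ij l).
by case: (k == i); case: (k == j); case: (l == i); case: (l == j) => //= _ _; ring.
Qed.

Lemma sqnorm_comb_one_edge (a : 'I_m -> R) : \sum_k a k = 0 ->
  2 * sqnorm (\sum_k a k *: p k) = u ^+ 2 * \sum_k a k ^+ 2 - 2 * (v ^+ 2 - u ^+ 2) * (a i * a j).
Proof.
move=> a0; rewrite sqnorm_comb_sum0 //.
have row k : \sum_l a k * a l * sqnorm (p k - p l) =
    - u ^+ 2 * a k ^+ 2 + ((v ^+ 2 - u ^+ 2) * a j * a k) * (k == i)%:R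
    + ((v ^+ 2 - u ^+ 2) * a i * a k) * (k == j)%:R.
  rewrite (eq_bigr (fun l => a k * u ^+ 2 * a l + (- u ^+ 2 * a k ^+ 2) * (l == k)%:R
      + (v ^+ 2 - u ^+ 2) * a k * (k == i)%:R * a l * (l == j)%:R
      + (v ^+ 2 - u ^+ 2) * a k * (k == j)%:R * a l * (l == i)%:R)); last first.
    move=> l _; rewrite sqnorm_one_edge [k == l]eq_sym.
    by case: (eqVneq l k) => [->|_] /=; ring.
  by rewrite !big_split /= !sumr_delta -mulr_sumr a0; ring.
rewrite (eq_bigr _ (fun k _ => row k)) !big_split /= !sumr_delta -mulr_sumr; ring.
Qed.

End OneEdgeDistances.

Lemma one_edge_simplex_sqr_lt (R : rcfType) N d (p : 'I_N.+2 -> 'rV[R]_d) (u v : R) :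
  0 < u -> one_edge_simplex p u v -> N%:R * v ^+ 2 < 2 * N.+1%:R * u ^+ 2.
Proof.
move=> u_gt0 [indep_p [i [j [neq_ij edist_p]]]].
have [-> | N_gt0] := posnP N; first by rewrite mul0r !mulr_gt0 ?exprn_gt0.
pose c : R := N.+2%:R.
pose a k := c * (k == i)%:R + c * (k == j)%:R - 2.
have not_ij k : (k == i) && (k == j) = false by case: eqP => // ->; exact: negbTE.
have a_sum0 : \sum_k a k = 0.
  by rewrite sumrB big_split /= !sumr_delta sumr_const card_ord /c -mulr_natl; ring.
have a_sqr : \sum_k a k ^+ 2 = 2 * c * N%:R.
  rewrite (eq_bigr (fun k => 4 + (c ^+ 2 - 4 * c) * (k == i)%:R + (c ^+ 2 - 4 * c) * (k == j)%:R));
    last by move=> k _; rewrite /a; move: (not_ij k); case: (k == i); case: (k == j) => //= _; ring.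
  by rewrite !big_split /= !sumr_delta sumr_const card_ord /c -mulr_natl; ring.
have a_ij : a i = N%:R /\ a j = N%:R.
  rewrite /a !eqxx (negbTE neq_ij) eq_sym (negbTE neq_ij) /c /=; split; ring.
have comb_neq0 : \sum_k a k *: p k != 0.
  apply/eqP => /(indep_p a a_sum0)/(_ i)/eqP N0.
  by rewrite a_ij.1 pnatr_eq0 (gtn_eqF N_gt0) in N0.
move: comb_neq0; rewrite -sqnorm_gt0 -(pmulr_rgt0 _ (ltr0Sn R 1)).
rewrite (sqnorm_comb_one_edge neq_ij edist_p a_sum0) a_sqr a_ij.1 a_ij.2 /c.
have -> : u ^+ 2 * (2 * N.+2%:R * N%:R) - 2 * (v ^+ 2 - u ^+ 2) * (N%:R * N%:R) =
    (2 * N%:R) * (2 * N.+1%:R * u ^+ 2 - N%:R * v ^+ 2) by ring.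
by rewrite pmulr_rgt0 ?subr_gt0 // mulr_gt0 ?ltr0n.
Qed.

Section ApexSimplex.

Variables (R : rcfType) (n : nat) (j : 'I_n.+1) (s y t z : R).
Hypothesis j_neq0 : j != 0.

Definition apex : 'rV[R]_n.+1 := \row_m (if m == 0 then z else y + (m == j)%:R * t).

Definition apex_simplex (k : 'I_n.+1) : 'rV[R]_n.+1 :=
  if k == 0 then apex else s *: delta_mx 0 k.

Lemma sqnorm_apex : sqnorm apex = z ^+ 2 + n%:R * y ^+ 2 + 2 * y * t + t ^+ 2.
Proof.
have j0 : (0 == j) = false by rewrite eq_sym (negbTE j_neq0).
rewrite /sqnorm (eq_bigr (fun m => y ^+ 2 + (z ^+ 2 - y ^+ 2) * (m == 0)%:R
    + (2 * y * t + t ^+ 2) * (m == j)%:R)); last first.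
  move=> m _; rewrite mxE; case: (eqVneq m 0) => [->|_]; first by rewrite j0 /=; ring.
  by case: (m == j) => /=; ring.
by rewrite !big_split /= !sumr_delta sumr_const card_ord -mulr_natl; ring.
Qed.

Lemma sqnorm_apex_sub_vertex k : k != 0 ->
  sqnorm (apex - s *: delta_mx 0 k) =
  z ^+ 2 + n%:R * y ^+ 2 + 2 * y * t + t ^+ 2 - 2 * s * (y + (k == j)%:R * t) + s ^+ 2.
Proof. by move=> /negbTE k0; rewrite sqnorm_subZdelta sqnorm_apex mxE k0. Qed.

Lemma apex_simplex_indep : s != 0 -> z != 0 -> aff_indep apex_simplex.
Proof.
move=> s_neq0 z_neq0 c _ comb0.
have coord m : c 0 * (apex 0 m - s * (m == 0)%:R) + s * c m = 0.
  have := congr1 (fun x : 'rV[R]_n.+1 => x 0 m) comb0; rewrite summxE mxE => <-.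
  rewrite -(sumr_delta (fun k => s * c k) m).
  rewrite -(sumr_delta (fun _ : 'I_n.+1 => c 0 * (apex 0 m - s * (m == 0)%:R)) 0).
  rewrite -big_split; apply: eq_bigr => k _ /=; rewrite /apex_simplex.
  case: (eqVneq k 0) => [->|/negbTE k0]; rewrite ?k0 !mxE /=.
    by rewrite [0 == m]eq_sym; case: (m == 0) => /=; ring.
  by rewrite [k == m]eq_sym; case: (m == k) => /=; ring.
have c0 : c 0 = 0.
  have : c 0 * z = 0 by rewrite -(coord 0) mxE eqxx /=; ring.
  by move/eqP; rewrite mulf_eq0 (negbTE z_neq0) orbF => /eqP.
move=> k; have : s * c k = 0 by rewrite -(coord k) c0 mul0r add0r.
by move/eqP; rewrite mulf_eq0 (negbTE s_neq0) => /eqP.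
Qed.

Lemma apex_simplex_one_edge (u v : R) : 0 <= u -> 0 <= v -> s != 0 -> z != 0 ->
  2 * s ^+ 2 = u ^+ 2 ->
  z ^+ 2 + n%:R * y ^+ 2 + 2 * y * t + t ^+ 2 - 2 * s * y + s ^+ 2 = u ^+ 2 ->
  u ^+ 2 - 2 * s * t = v ^+ 2 ->
  one_edge_simplex apex_simplex u v.
Proof.
move=> u_ge0 v_ge0 s_neq0 z_neq0 base_u side_u side_v.
split; first exact: apex_simplex_indep.
exists 0, j; split; first by rewrite eq_sym.
have edist_apex k : k != 0 -> edist apex (s *: delta_mx 0 k) = if k == j then v else u.
  move=> k0; rewrite edistE sqnorm_apex_sub_vertex //.
  case: (k == j) => /=.
    by rewrite -(ger0_norm v_ge0) -sqrtr_sqr -side_v -side_u; congr Num.sqrt; ring.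
  by rewrite -(ger0_norm u_ge0) -sqrtr_sqr -side_u; congr Num.sqrt; ring.
move=> k l; rewrite /apex_simplex.
case: (eqVneq k 0) => [->|k0]; case: (eqVneq l 0) => [->|l0] neq_kl //.
- by rewrite andbF orbF edist_apex.
- by rewrite andbT edistC edist_apex.
rewrite andbF edistE sqnorm_Zdelta_sub // base_u.
by rewrite sqrtr_sqr ger0_norm.
Qed.

End ApexSimplex.

Lemma one_edge_simplex_exists (R : rcfType) N (u v : R) : 0 < u -> 0 < v ->
  N%:R * v ^+ 2 < 2 * N.+1%:R * u ^+ 2 ->
  exists p : 'I_N.+2 -> 'rV[R]_N.+2, one_edge_simplex p u v.
Proof.
move=> u_gt0 v_gt0 lt_vu.
(* w = v^2 / (2 s) fixes the long edge; y = w / (N + 1) minimises the squared height z2. *)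
pose s := u / Num.sqrt 2.
pose w := v ^+ 2 / (2 * s).
pose z2 := w * (2 * s - w + w / N.+1%:R).
have s_gt0 : 0 < s by rewrite divr_gt0 ?sqrtr_gt0 ?ltr0n.
have s_neq0 : s != 0 by rewrite gt_eqF.
have N1_neq0 : N.+1%:R != 0 :> R by rewrite pnatr_eq0.
have base_u : 2 * s ^+ 2 = u ^+ 2.
  by rewrite expr_div_n sqr_sqrtr ?ler0n //; field.
have w_gt0 : 0 < w by rewrite divr_gt0 ?exprn_gt0 // mulr_gt0.
have z2_gt0 : 0 < z2.
  have -> : z2 = w * ((2 * N.+1%:R * u ^+ 2 - N%:R * v ^+ 2) / (2 * s * N.+1%:R)).
    by rewrite /z2 /w -base_u; field; rewrite addrC natr1 N1_neq0 s_neq0.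
  by rewrite mulr_gt0 // divr_gt0 ?subr_gt0 // mulr_gt0 ?ltr0n // mulr_gt0.
exists (apex_simplex ord_max s (w / N.+1%:R) (s - w) (Num.sqrt z2)).
apply: apex_simplex_one_edge; rewrite ?ltW //.
- by rewrite gt_eqF // sqrtr_gt0.
- by rewrite sqr_sqrtr ?ltW // /z2 -base_u; field; rewrite addrC natr1.
- by rewrite -base_u /w; field.
Qed.

Lemma ltr_div_sqrt (R : rcfType) (a b u v : R) : 0 < a -> 0 < b -> 0 < u -> 0 <= v ->
  (v / u < Num.sqrt (a / b)) = (b * v ^+ 2 < a * u ^+ 2).
Proof.
move=> a_gt0 b_gt0 u_gt0 v_ge0.
rewrite -[v / u]ger0_norm; last by rewrite divr_ge0 // ltW.
rewrite -sqrtr_sqr ltr_sqrt ?divr_gt0 //.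
by rewrite expr_div_n ltr_pdivrMr ?exprn_gt0 // mulrAC ltr_pdivlMr // mulrC.
Qed.

Theorem corollary5p3 (R : rcfType) (n : nat) (u v : R) :
  (2 <= n)%N -> 0 < u -> 0 < v ->
  ((exists (d : nat) (p : 'I_n.+1 -> 'rV[R]_d), one_edge_simplex p u v) <->
   (0 < v / u /\ v / u < Num.sqrt ((2 * n)%:R / (n.-1)%:R))).
Proof.
case: n => [|[|N]] // _ u_gt0 v_gt0.
rewrite ltr_div_sqrt ?ltr0n ?ltW // natrM divr_gt0 //.
split => [[d [p one_edge]] | [_ lt_vu]].
  by split => //; exact: one_edge_simplex_sqr_lt one_edge.
by have [p ?] := one_edge_simplex_exists u_gt0 v_gt0 lt_vu; exists N.+3, p.
Qed.
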